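(* Let $G\in\mathcal{RG}^{{\underline{\kappa}},*}_{g,n}$ be non-bipartite, $w$ a weight function on $G$ with $\operatorname{vp}_G(w)=\underline b$, and $e\in S(G)$ a static edge. (1) If $e$ is a bridge, let $G'$ be the bipartite connected component of $G-e$, colored black/white so that $e$ is incident to a black vertex, and let $I,J\subset\{1,\dots,n\}$ be the labels of black and white vertices of $G'$. Then $w(e)=\sum_{i\in I}b_i-\sum_{j\in J}b_j$. (2) If $e$ is not a bridge, then $G-e$ is connected and bipartite; color it so that both endpoints of $e$ are black and let $I,J$ be the labels of black and white vertices. Then $I\cup J=\{1,\dots,n\}$ and $w(e)=\tfrac12\bigl(\sum_{i\in I}b_i-\sum_{j\in J}b_j\bigr)$.
   Context: A ribbon graph is a finite graph (loops and multiple edges allowed) with a cyclic ordering of half-edges at each vertex; the cyclic orders determine faces (boundary cycles) and the genus. For a partition ${\underline{\kappa}}$ with all parts odd, $\mathcal{RG}^{{\underline{\kappa}},*}_{g,n}$ is the set of isomorphism classes of connected ribbon graphs of genus $g$ with $n$ vertices labeled $1,\dots,n$ and face degrees given by ${\underline{\kappa}}$ (the duals of ribbon graphs with $n$ labeled faces and vertex degrees ${\underline{\kappa}}$). A weight function is any $w:E(G)\to\mathbb R$; its vertex perimeters are $\operatorname{vp}_G(w)_v=\sum_e a_{ve}w(e)$ with $a_{ve}=2$ if $e$ is a loop at $v$, $1$ if $e$ is a non-loop edge incident to $v$, $0$ otherwise. For non-bipartite $G$, an edge $e$ is static if at least one connected component of $G-e$ is bipartite; $S(G)$ is the set of static edges.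 *)

From HB Require Import structures.
From mathcomp Require Import all_boot all_order all_algebra all_fingroup.
Set Implicit Arguments. Unset Strict Implicit. Unset Printing Implicit Defensive.
Import GRing.Theory Num.Theory.

(* Ribbon graphs in the combinatorial (dart) encoding:
   - D : finite set of darts (half-edges),
   - iota : fixed-point-free involution on D (edges = iota-orbits {d, iota d}),
   - sigma : rotation permutation (vertices = sigma-orbits, cyclic order),
   - vtx : D -> 'I_n labels the sigma-orbits bijectively by 0..n-1
     (label i corresponds to the paper's vertex i+1),
   - faces = orbits of sigma o iota. *)

Section RibbonGraphs.
Variables (D : finType) (n : nat) (sigma iota : {perm D}) (vtx : D -> 'I_n).

(* mathcomp: (p * q)%g x = q (p x), so this is sigma o iota *)
Definition face_perm : {perm D} := (iota * sigma)%g.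

Definition adjG : rel 'I_n :=
  fun x y => [exists d, (vtx d == x) && (vtx (iota d) == y)].

Definition in_edge (e d : D) : bool := (d == e) || (d == iota e).

Definition adj_minus (e : D) : rel 'I_n :=
  fun x y => [exists d, ~~ in_edge e d && (vtx d == x) && (vtx (iota d) == y)].

(* G is a connected ribbon graph of genus g with n labeled vertices and
   face degrees kappa (a partition with all parts odd). *)
Definition ribbon_graph_in (kappa : seq nat) (g : nat) : Prop :=
  (forall d, iota (iota d) = d) /\
  (forall d, iota d != d) /\
  (forall d d', (vtx d == vtx d') = fconnect sigma d d') /\
  (forall v : 'I_n, exists d, vtx d = v) /\
  (forall x y : 'I_n, connect adjG x y) /\
  all odd kappa /\
  perm_eq kappa [seq fingraph.order face_perm d | d <- enum (froots face_perm)] /\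
  (n + size kappa + 2 * g = 2 + #|D| %/ 2)%N.

Definition bipartite : Prop :=
  exists c : 'I_n -> bool, forall d, c (vtx d) != c (vtx (iota d)).

Definition comp_minus (e : D) (x : 'I_n) : pred 'I_n :=
  [pred y | connect (adj_minus e) x y].

Definition proper_minus (e : D) (C : pred 'I_n) (c : 'I_n -> bool) : Prop :=
  forall d, ~~ in_edge e d -> C (vtx d) -> c (vtx d) != c (vtx (iota d)).

Definition static_edge (e : D) : Prop :=
  ~ bipartite /\ exists x c, proper_minus e (comp_minus e x) c.

Definition is_bridge (e : D) : Prop :=
  exists x y : 'I_n, ~~ connect (adj_minus e) x y.

End RibbonGraphs.

From mathcomp Require Import all_boot all_order all_algebra all_fingroup.
From mathcomp Require Import lra.
Import GRing.Theory Num.Theory.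
Set Implicit Arguments. Unset Strict Implicit.
Local Open Scope ring_scope.

(* Sum the vertex perimeters b over a component C of G - e with signs +1 on
   black and -1 on white vertices.  Each dart d then contributes w d with
   the sign of its own vertex.  Along an edge of G - e inside C the two
   endpoints have opposite colours, so the two darts cancel; only the darts
   of e that lie in C survive.  If e is a bridge exactly one of them lies in
   the component of its black endpoint, giving w e; otherwise G - e is
   connected, both endpoints are black (a differently coloured pair would
   2-colour G), and both darts survive, giving 2 w e. *)

Lemma sumr_odd_involution (R : realDomainType) (T : finType) (f : T -> T)
    (P : pred T) (F : T -> R) :
  involutive f -> (forall x, P (f x) = P x) ->
  (forall x, P x -> F (f x) = - F x) ->
  \sum_(x | P x) F x = 0.
Proof.
move=> fK Pf Fodd.
have : \sum_(x | P x) F x = - \sum_(x | P x) F x.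
  rewrite [LHS](reindex_inj (inv_inj fK)) /= -sumrN.
  apply: eq_big => [x | x Px]; first by rewrite Pf.
  by rewrite Fodd // -Pf.
by move=> S; lra.
Qed.

Section GraphMinusEdge.
Variables (D : finType) (n : nat) (iota : {perm D}) (vtx : D -> 'I_n) (e : D).
Hypothesis iotaK : involutive iota.

Local Notation adj := (adj_minus iota vtx e).
Local Notation comp := (comp_minus iota vtx e).

Lemma in_edge_iota d : in_edge iota e (iota d) = in_edge iota e d.
Proof.
by rewrite /in_edge (inj_eq (@perm_inj _ iota)) (canF_eq iotaK) orbC.
Qed.

Lemma adj_minus_sym : symmetric adj.
Proof.
suff adjC x y : adj x y -> adj y x by move=> x y; apply/idP/idP; apply: adjC.
case/existsP=> d /andP[/andP[de dx] dy].
by apply/existsP; exists (iota d); rewrite in_edge_iota de iotaK dy dx.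
Qed.

Lemma comp_minus_iota x d : ~~ in_edge iota e d ->
  comp x (vtx (iota d)) = comp x (vtx d).
Proof.
move=> de; rewrite /comp_minus /=.
apply: same_connect_r; first exact: sym_connect_sym adj_minus_sym.
apply: connect1; apply/existsP; exists (iota d).
by rewrite in_edge_iota de iotaK !eqxx.
Qed.

Lemma connect_minus_edge :
  (forall x y, connect (adjG iota vtx) x y) ->
  connect adj (vtx e) (vtx (iota e)) -> forall x y, connect adj x y.
Proof.
move=> connG ee.
have adjG_minus x y : adjG iota vtx x y -> connect adj x y.
  case/existsP=> d /andP[/eqP <- /eqP <-].
  have [de | de] := boolP (in_edge iota e d); last first.
    by apply: connect1; apply/existsP; exists d; rewrite de !eqxx.
  case/orP: de => /eqP ->; rewrite ?iotaK //.
  by rewrite (sym_connect_sym adj_minus_sym).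
by move=> x y; apply: connect_sub (connG x y) => u v /adjG_minus.
Qed.

Lemma proper_minus_endpoints (c : 'I_n -> bool) :
  ~ bipartite iota vtx -> proper_minus iota vtx e predT c ->
  c (vtx e) = c (vtx (iota e)).
Proof.
move=> nbip cP; apply/eqP; case: eqP => // /eqP ce; case: nbip; exists c => d.
have [de | de] := boolP (in_edge iota e d); last exact: cP.
by case/orP: de => /eqP ->; rewrite ?iotaK // eq_sym.
Qed.

Variables (R : realFieldType) (w : D -> R) (b : 'I_n -> R).
Hypothesis w_iota : forall d, w (iota d) = w d.
Hypothesis perimeter : forall v, \sum_(d | vtx d == v) w d = b v.

Let signed (c : 'I_n -> bool) d := if c (vtx d) then w d else - w d.

Lemma signed_perimeter_sum (C : pred 'I_n) (c : 'I_n -> bool) :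
  \sum_(y | C y && c y) b y - \sum_(y | C y && ~~ c y) b y =
  \sum_(d | C (vtx d)) signed c d.
Proof.
transitivity (\sum_(y | C y) \sum_(d | vtx d == y) signed c d).
  rewrite [RHS](bigID c) /= -sumrN; congr (_ + _); apply: eq_bigr.
    move=> y /andP[_ cy]; rewrite -perimeter.
    by apply: eq_bigr => d /eqP dy; rewrite /signed dy cy.
  move=> y /andP[_ /negbTE cy]; rewrite -perimeter -sumrN.
  by apply: eq_bigr => d /eqP dy; rewrite /signed dy cy.
rewrite [RHS](partition_big vtx C) //; apply: eq_bigr => y Cy.
by apply: eq_bigl => d; case: eqP => [->|]; rewrite ?Cy ?andbF.
Qed.

Lemma signed_sum_off_edge x (c : 'I_n -> bool) :
  proper_minus iota vtx e (comp x) c ->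
  \sum_(d | comp x (vtx d) && ~~ in_edge iota e d) signed c d = 0.
Proof.
move=> cP; apply: sumr_odd_involution iotaK _ _ => [d | d /andP[Cd de]].
  have [de | de] := boolP (in_edge iota e d).
    by rewrite in_edge_iota de !andbF.
  by rewrite in_edge_iota de comp_minus_iota.
have := cP d de Cd; rewrite /signed w_iota.
by case: (c (vtx d)); case: (c (vtx (iota d))); rewrite ?opprK.
Qed.

Lemma signed_component_sum x (c : 'I_n -> bool) :
  iota e != e -> proper_minus iota vtx e (comp x) c ->
  \sum_(y | comp x y && c y) b y - \sum_(y | comp x y && ~~ c y) b y =
  (if comp x (vtx e) then signed c e else 0)
    + (if comp x (vtx (iota e)) then signed c (iota e) else 0).
Proof.
move=> ee cP; rewrite signed_perimeter_sum (bigID (in_edge iota e)) /=.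
rewrite signed_sum_off_edge // addr0 big_mkcond (bigD1 e) //.
rewrite (bigD1 (iota e) ee) /= big1 => [|d /andP[de dee]]; last first.
  by rewrite /in_edge (negbTE de) (negbTE dee) andbF.
by rewrite /in_edge !eqxx orbT !andbT addr0.
Qed.

End GraphMinusEdge.

Theorem lemma3p3 (R : realFieldType) (D : finType) (n g : nat)
  (kappa : seq nat) (sigma iota : {perm D}) (vtx : D -> 'I_n)
  (w : D -> R) (b : 'I_n -> R) (e : D) :
  ribbon_graph_in sigma iota vtx kappa g ->
  ~ bipartite iota vtx ->
  (forall d, w (iota d) = w d) ->
  (forall v : 'I_n, \sum_(d | vtx d == v) w d = b v) ->
  static_edge iota vtx e ->
  (is_bridge iota vtx e ->
     forall x : 'I_n, (x = vtx e \/ x = vtx (iota e)) ->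
     forall c : 'I_n -> bool,
       proper_minus iota vtx e (comp_minus iota vtx e x) c -> c x = true ->
       w e = \sum_(y | comp_minus iota vtx e x y && c y) b y
             - \sum_(y | comp_minus iota vtx e x y && ~~ c y) b y)
  /\
  (~ is_bridge iota vtx e ->
     (exists c : 'I_n -> bool, proper_minus iota vtx e predT c)
     /\ (forall c : 'I_n -> bool, proper_minus iota vtx e predT c ->
           c (vtx e) = c (vtx (iota e)))
     /\ (forall c : 'I_n -> bool, proper_minus iota vtx e predT c ->
           c (vtx e) = true -> c (vtx (iota e)) = true ->
           [set y | comp_minus iota vtx e (vtx e) y && c y]
             :|: [set y | comp_minus iota vtx e (vtx e) y && ~~ c y] = [set: 'I_n]
           /\ w e = (\sum_(y | comp_minus iota vtx e (vtx e) y && c y) b y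
                    - \sum_(y | comp_minus iota vtx e (vtx e) y && ~~ c y) b y) / 2)).
Proof.
move=> [iotaK [iota_fpf [_ [_ [connG _]]]]] nbip w_iota perim [_ [x0 [c0 c0P]]].
have ee := iota_fpf e.
have connE := connect_minus_edge (e:=e) iotaK connG.
have adjC := sym_connect_sym (adj_minus_sym vtx e iotaK).
have signedE := signed_component_sum (e:=e) iotaK w_iota perim.
have compE x y : comp_minus iota vtx e x y = connect (adj_minus iota vtx e) x y.
  by [].
split=> [[u [v uv]] x xe c cP cx | nbridge].
  have split_e : ~~ connect (adj_minus iota vtx e) (vtx e) (vtx (iota e)).
    by apply: contra uv => /connE->.
  rewrite (signedE x c ee cP) !compE.
  case: xe cx => -> cx; rewrite connect0.
    by rewrite (negbTE split_e) addr0 cx.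
  by rewrite adjC (negbTE split_e) add0r w_iota cx.
have connT x y : connect (adj_minus iota vtx e) x y.
  by case: (boolP (connect _ x y)) => // xy; case: nbridge; exists x, y.
have proper_comp c : proper_minus iota vtx e predT c ->
    proper_minus iota vtx e (comp_minus iota vtx e (vtx e)) c.
  by move=> cP d de _; apply: cP.
split; first by exists c0 => d de _; apply: c0P de (connT _ _).
split=> [c | c cP c1 c2]; first exact: proper_minus_endpoints.
split; first by apply/setP => y; rewrite !inE compE connT /= orbN.
rewrite (signedE _ c ee (proper_comp c cP)) !compE !connT c1 c2 w_iota.
lra.
Qed.
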